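(* Let $R$ be a finite commutative Frobenius ring of characteristic $2$, let $G=\{g_1,\dots,g_n\}$ be a finite group of order $n$ with a fixed listing of its elements, let $v_1\neq v_2$ be elements of the group ring $RG$, and let $A$ be an $n\times n$ reverse circulant matrix over $R$. Let $C_\sigma$ be the code over $R$ generated by the $2n\times 4n$ matrix $$M(\sigma)=\left(\, I_{2n} \;\middle|\; \begin{matrix} \sigma(v_1) & \sigma(v_2)+A\\ \sigma(v_2)+A & \sigma(v_1)\end{matrix}\,\right).$$ Then $C_\sigma$ is a self-dual code of length $4n$ if and only if $$(\sigma(v_1+v_2)+A)(\sigma((v_1+v_2)^* )+A)=I_n \quad\text{and}\quad \sigma(v_1)(\sigma((v_1+v_2)^* )+A)=(\sigma(v_1+v_2)+A)\sigma(v_1^* ).$$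
   Context: For $v=\sum_{g\in G}\alpha_g g\in RG$, $\sigma(v)$ is the $n\times n$ matrix over $R$ whose $(i,j)$ entry is $\alpha_{g_i^{-1}g_j}$. The canonical involution is $v^*=\sum_{g}\alpha_g g^{-1}$. An $n\times n$ matrix $(a_{ij})$ is reverse circulant if $a_{ij}$ depends only on $(i+j)\bmod n$. A code is the $R$-submodule of $R^{4n}$ spanned by the rows of the generator matrix; it is self-dual if it equals its dual with respect to the Euclidean inner product $\langle x,y\rangle=\sum_i x_iy_i$. *)

From HB Require Import structures.
From mathcomp Require Import all_boot all_order all_algebra all_fingroup.
From mathcomp Require Import algC.
Set Implicit Arguments. Unset Strict Implicit. Unset Printing Implicit Defensive.
Import GRing.Theory Num.Theory.
Local Open Scope ring_scope.

(* Frobenius ring (finite commutative case), via a generating character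
   (Wood): an additive character chi : (R,+) -> C^* whose kernel contains
   no nonzero ideal. Since R is commutative, every nonzero ideal contains
   a nonzero principal ideal R a, so the condition is: for every a != 0
   there is r with chi (r * a) != 1. Characters take values in algC. *)
Definition generating_character (R : finComNzRingType) (chi : R -> algC) : Prop :=
  [/\ forall x : R, chi x != 0,
      forall x y : R, chi (x + y) = chi x * chi y
    & forall a : R, a != 0 -> exists r : R, chi (r * a) != 1].

Definition frobenius_ring (R : finComNzRingType) : Prop :=
  exists chi : R -> algC, generating_character chi.

(* Group ring RG: elements sum_g alpha_g g represented by g |-> alpha_g. *)
Definition group_ring (R : Type) (gT : finGroupType) := {ffun gT -> R}.

Definition gr_star (R : Type) (gT : finGroupType) (v : {ffun gT -> R})
  : {ffun gT -> R} := [ffun g => v (g^-1)%g].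

Definition sigma (R : Type) (gT : finGroupType) (n : nat) (e : 'I_n -> gT)
  (v : {ffun gT -> R}) : 'M[R]_n :=
  \matrix_(i < n, j < n) v ((e i)^-1 * e j)%g.

Definition reverse_circulant (R : Type) (n : nat) (A : 'M[R]_n) : Prop :=
  forall i j k l : 'I_n, ((i + j) %% n = (k + l) %% n)%N -> A i j = A k l.

Definition code_gen (R : comNzRingType) (k m : nat) (M : 'M[R]_(k, m))
  (x : 'rV[R]_m) : Prop := exists u : 'rV[R]_k, x = u *m M.

Definition euclid_ip (R : comNzRingType) (m : nat) (x y : 'rV[R]_m) : R :=
  \sum_(i < m) x 0 i * y 0 i.

Definition dual_code (R : comNzRingType) (m : nat) (C : 'rV[R]_m -> Prop)
  (x : 'rV[R]_m) : Prop := forall c, C c -> euclid_ip x c = 0.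

Definition self_dual (R : comNzRingType) (m : nat) (C : 'rV[R]_m -> Prop) : Prop :=
  forall x, C x <-> dual_code C x.

Definition Msigma (R : comNzRingType) (gT : finGroupType) (n : nat)
  (e : 'I_n -> gT) (v1 v2 : {ffun gT -> R}) (A : 'M[R]_n)
  : 'M[R]_(n + n, (n + n) + (n + n)) :=
  row_mx 1%:M (block_mx (sigma e v1) (sigma e v2 + A)
                        (sigma e v2 + A) (sigma e v1)).

(* The generator matrix is systematic, M = (I | B), and such a code is
   self-dual exactly when M M^T = 0, i.e. B B^T = -I: the inclusion of C in
   its dual is orthogonality of the rows, and conversely a word (x | y)
   orthogonal to every row satisfies x = -y B^T, hence equals x M once
   B^T B = -I. Over a ring of characteristic 2, for B = [S T; T S] the
   condition B B^T = I splits into S S^T + T T^T = I and S T^T = T S^T, which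
   is the stated pair of equations for S + T = sigma(v1 + v2) + A, using
   sigma (v^* ) = sigma(v)^T and the symmetry of the reverse circulant A. *)

From HB Require Import structures.
From mathcomp Require Import all_boot all_order all_algebra all_fingroup.
From mathcomp Require Import algC.
Set Implicit Arguments. Unset Strict Implicit. Unset Printing Implicit Defensive.
Import GRing.Theory.
Local Open Scope ring_scope.

Section SystematicCodes.
Variable R : comNzRingType.

Lemma euclid_ipE m (x y : 'rV[R]_m) : euclid_ip x y = (x *m y^T) 0 0.
Proof. by rewrite mxE; apply: eq_bigr => i _; rewrite mxE. Qed.

Lemma euclid_ip_code_gen k m (M : 'M[R]_(k, m)) x u :
  euclid_ip x (u *m M) = (x *m M^T *m u^T) 0 0.
Proof. by rewrite euclid_ipE trmx_mul mulmxA. Qed.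

Lemma dual_code_genP k m (M : 'M[R]_(k, m)) x :
  dual_code (code_gen M) x <-> x *m M^T = 0.
Proof.
split=> [dualx | xMT0 _ [u ->]]; last first.
  by rewrite euclid_ip_code_gen xMT0 !mul0mx mxE.
apply/rowP => i; have := dualx _ (ex_intro _ (delta_mx 0 i) erefl).
by rewrite euclid_ip_code_gen trmx_delta -colE !mxE.
Qed.

Lemma code_gen_self_orthogonalP k m (M : 'M[R]_(k, m)) :
  (forall x, code_gen M x -> dual_code (code_gen M) x) <-> M *m M^T = 0.
Proof.
split=> [orthoM | MMT0 _ [u ->]]; last first.
  by apply/dual_code_genP; rewrite -mulmxA MMT0 mulmx0.
apply/row_matrixP => i; rewrite row0 rowE mulmxA.
exact/dual_code_genP/orthoM/(ex_intro _ (delta_mx 0 i) erefl).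
Qed.

Lemma mulmx_tr_row_mx1 k m (B : 'M[R]_(k, m)) :
  row_mx 1%:M B *m (row_mx 1%:M B)^T = 1%:M + B *m B^T.
Proof. by rewrite tr_row_mx mul_row_col trmx1 mulmx1. Qed.

Lemma mulmx_tr_row_mx1_eq0 k (B : 'M[R]_k) :
  row_mx 1%:M B *m (row_mx 1%:M B)^T = 0 <-> B *m B^T = - 1%:M.
Proof.
rewrite mulmx_tr_row_mx1 addrC.
by split=> [/eqP | ->]; rewrite ?addNr // addr_eq0 => /eqP.
Qed.

Lemma dual_code_gen_systematic k (B : 'M[R]_k) x :
  B *m B^T = - 1%:M ->
  dual_code (code_gen (row_mx 1%:M B)) x -> code_gen (row_mx 1%:M B) x.
Proof.
move=> BBT /dual_code_genP.
have BTB : B^T *m B = - 1%:M.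
  apply/eqP; rewrite -eqr_opp -mulmxN opprK; apply/eqP/mulmx1C.
  by rewrite mulNmx BBT opprK.
rewrite -[x]hsubmxK tr_row_mx mul_row_col trmx1 mulmx1.
move/eqP; rewrite addr_eq0 => /eqP xl; exists (lsubmx x).
rewrite mul_mx_row mulmx1; congr row_mx.
by rewrite xl mulNmx -mulmxA BTB mulmxN mulmx1 opprK.
Qed.

Lemma self_dual_systematicP k (B : 'M[R]_k) :
  self_dual (code_gen (row_mx 1%:M B)) <-> B *m B^T = - 1%:M.
Proof.
split=> [selfdual | BBT x].
  apply/mulmx_tr_row_mx1_eq0/code_gen_self_orthogonalP => x.
  by case: (selfdual x).
split; last exact: dual_code_gen_systematic.
by move: x; apply/code_gen_self_orthogonalP/mulmx_tr_row_mx1_eq0.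
Qed.

End SystematicCodes.

Section CharacteristicTwo.
Variable R : comNzRingType.
Hypothesis char2 : 2%:R = 0 :> R.

Lemma addmx_char2 m p (X : 'M[R]_(m, p)) : X + X = 0.
Proof. by apply/matrixP => i j; rewrite !mxE -mulr2n -mulr_natl char2 mul0r. Qed.

Lemma oppmx_char2 m p (X : 'M[R]_(m, p)) : - X = X.
Proof. by apply/esym/eqP; rewrite -addr_eq0 addmx_char2. Qed.

Lemma addmx_eq0_char2 m p (X Y : 'M[R]_(m, p)) : (X + Y == 0) = (X == Y).
Proof. by rewrite addr_eq0 oppmx_char2. Qed.

Lemma mulmx_tr_block_symP n (S T : 'M[R]_n) :
  block_mx S T T S *m (block_mx S T T S)^T = 1%:M <->
  (S + T) *m (S + T)^T = 1%:M /\ S *m (S + T)^T = (S + T) *m S^T.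
Proof.
rewrite raddfD /=.
have -> : (S + T) *m (S^T + T^T) = (S *m S^T + T *m T^T) + (S *m T^T + T *m S^T).
  by rewrite mulmxDl !mulmxDr [X in _ + X]addrC addrACA.
rewrite mulmxDr mulmxDl tr_block_mx mulmx_block (scalar_mx_block n n).
split=> [/eq_block_mx [SST1 /eqP STTS _ _] | [SST1 /addrI STTS]].
  move: STTS; rewrite addmx_eq0_char2 => /eqP STTS.
  by rewrite SST1 STTS addmx_char2 addr0.
rewrite STTS addmx_char2 addr0 in SST1.
by rewrite STTS addmx_char2 [T *m T^T + _]addrC SST1.
Qed.

End CharacteristicTwo.

Lemma sigmaD (R : zmodType) (gT : finGroupType) n (e : 'I_n -> gT)
    (v w : {ffun gT -> R}) :
  sigma e (v + w) = sigma e v + sigma e w.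
Proof. by apply/matrixP => i j; rewrite !mxE ffunE. Qed.

Lemma sigma_star (R : Type) (gT : finGroupType) n (e : 'I_n -> gT)
    (v : {ffun gT -> R}) :
  sigma e (gr_star v) = (sigma e v)^T.
Proof. by apply/matrixP => i j; rewrite !mxE ffunE invMg invgK. Qed.

Lemma reverse_circulant_sym (R : Type) n (A : 'M[R]_n) :
  reverse_circulant A -> A^T = A.
Proof.
by move=> rcA; apply/matrixP => i j; rewrite mxE; apply: rcA; rewrite addnC.
Qed.

Theorem mainTheorem2 (R : finComNzRingType) (gT : finGroupType) (n : nat)
  (e : 'I_n -> gT) (v1 v2 : {ffun gT -> R}) (A : 'M[R]_n) :
  frobenius_ring R ->
  (2%:R : R) = 0 ->
  bijective e ->
  v1 != v2 ->
  reverse_circulant A ->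
  (self_dual (code_gen (Msigma e v1 v2 A)) <->
   ((sigma e (v1 + v2) + A) *m (sigma e (gr_star (v1 + v2)) + A) = 1%:M /\
    sigma e v1 *m (sigma e (gr_star (v1 + v2)) + A)
      = (sigma e (v1 + v2) + A) *m sigma e (gr_star v1))).
Proof.
move=> _ char2 _ _ /reverse_circulant_sym symA.
have -> : sigma e (v1 + v2) + A = sigma e v1 + (sigma e v2 + A).
  by rewrite sigmaD addrA.
have -> : sigma e (gr_star (v1 + v2)) + A = (sigma e v1 + (sigma e v2 + A))^T.
  by rewrite sigma_star sigmaD addrA !raddfD /= symA.
apply: iff_trans (self_dual_systematicP _) _; rewrite oppmx_char2 // sigma_star.
exact: mulmx_tr_block_symP.
Qed.
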